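(* Consider $M$ positioning infrastructures; for the $m$-th infrastructure let $N_{\text{min}}^m$ be the minimum number of anchors required for positioning, $N_{\text{anc}}^m$ the total number of anchors providing ranging information, and $N_{\text{adv}}^m$ the number of anchors whose ranging information is manipulated by an uncoordinated attacker. Suppose that $$\left|\left\{m \mid N_{\text{anc}}^m - N_{\text{adv}}^m - N_{\text{min}}^m = 0\right\}\right| > 1 \ \lor\ \exists m,\ N_{\text{anc}}^m - N_{\text{adv}}^m - N_{\text{min}}^m > 0.$$ Then the true position $\mathbf{p}_{\text{usr}}(t)$ can be recovered from uncoordinated spoofing.
   Context: Idealized model of subset-based integrity monitoring across multiple infrastructures (e.g., GNSS, Wi-Fi, cellular): a platform at unknown true position $\mathbf{p}_{\text{usr}}(t)\in\mathbb{R}^3$ receives ranging measurements from anchors with known positions. Within each infrastructure $m$, for every subset of its anchors of size at least $N_{\text{min}}^m$ a position estimate is computed. Positioning noise and uncertainties are negligible (zero) while attacker-induced deviations are preserved, and geometry is good, so every benign-only subset yields exactly $\mathbf{p}_{\text{usr}}(t)$. ''Uncoordinated spoofing'' means manipulated ranging values are chosen independently (potentially randomly), so estimates from subsets involving manipulated measurements are random positions, almost surely inconsistent with the benign position and each other; ''recovered'' means the spoofed estimates can be excluded so that the remaining (more than one, mutually consistent) benign estimates give $\mathbf{p}_{\text{usr}}(t)$. *)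

From mathcomp Require Import all_boot all_order all_algebra.
Set Implicit Arguments. Unset Strict Implicit. Unset Printing Implicit Defensive.
Import Order.TTheory GRing.Theory Num.Theory.

(* A candidate anchor subset: an infrastructure index m together with a
   subset of the anchors of infrastructure m (anchors of m are 'I_(Nanc m)). *)
Definition subset_t (M : nat) (Nanc : 'I_M -> nat) : Type :=
  {m : 'I_M & {set 'I_(Nanc m)}}.

Definition valid (M : nat) (Nanc Nmin : 'I_M -> nat) (s : subset_t Nanc) : bool :=
  (Nmin (tag s) <= #|tagged s|)%N.

Definition benign (M : nat) (Nanc : 'I_M -> nat)
  (Adv : forall m : 'I_M, {set 'I_(Nanc m)}) (s : subset_t Nanc) : bool :=
  [disjoint tagged s & Adv (tag s)].

Definition consistent (M : nat) (Nanc Nmin : 'I_M -> nat) (P : eqType)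
  (est : subset_t Nanc -> P) (s : subset_t Nanc) : Prop :=
  valid Nmin s /\ exists s', valid Nmin s' /\ s' <> s /\ est s' = est s.

(* Recovery: after excluding all inconsistent (isolated) estimates, there
   remain consistent estimates (hence more than one, mutually consistent),
   and every remaining estimate is the true position. *)
Definition recovered (M : nat) (Nanc Nmin : 'I_M -> nat) (P : eqType)
  (est : subset_t Nanc -> P) (p : P) : Prop :=
  (exists s, consistent Nmin est s) /\
  (forall s, consistent Nmin est s -> est s = p).

From mathcomp Require Import all_boot all_order all_algebra.
From mathcomp Require Import zify.
Import Order.TTheory GRing.Theory Num.Theory.

Set Implicit Arguments.
Unset Strict Implicit.
Unset Printing Implicit Defensive.

(* Recovery only needs two distinct valid benign subsets: their estimates
   coincide with the true position, so they are consistent, whereas a spoofed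
   estimate agrees with no other valid estimate and hence is never consistent.
   Within one infrastructure the set of all benign anchors has
   N_anc - N_adv elements; it is valid as soon as N_anc - N_adv >= N_min.
   Two tight infrastructures give two such sets with different tags, and a
   surplus anchor in one infrastructure lets us drop it to obtain a second
   valid benign subset of the same infrastructure. *)

Section BenignSubsets.

Variables (M : nat) (Nanc Nmin : 'I_M -> nat).
Variable Adv : forall m : 'I_M, {set 'I_(Nanc m)}.

Definition benign_valid (s : subset_t Nanc) : bool :=
  valid Nmin s && benign Adv s.

Definition benign_pair : Prop :=
  exists s1 s2, [/\ benign_valid s1, benign_valid s2 & s1 <> s2].

Lemma benign_valid_sub m (A : {set 'I_(Nanc m)}) :
  A \subset ~: Adv m -> (Nmin m <= #|A|)%N -> benign_valid (existT _ m A).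
Proof.
move=> sAC leA; rewrite /benign_valid /valid /benign /= leA.
by rewrite subsets_disjoint setCK in sAC.
Qed.

Lemma card_benign_anchors m : #|~: Adv m| = (Nanc m - #|Adv m|)%N.
Proof. by rewrite cardsCs setCK card_ord. Qed.

Lemma benign_valid_all m :
  (Nmin m + #|Adv m| <= Nanc m)%N -> benign_valid (existT _ m (~: Adv m)).
Proof. by move=> le; apply: benign_valid_sub => //; rewrite card_benign_anchors; lia. Qed.

Lemma benign_pair_of_tight m1 m2 : m1 != m2 ->
  (Nmin m1 + #|Adv m1| <= Nanc m1)%N -> (Nmin m2 + #|Adv m2| <= Nanc m2)%N ->
  benign_pair.
Proof.
move=> m12 le1 le2; exists (existT _ m1 (~: Adv m1)), (existT _ m2 (~: Adv m2)).
split; [exact: benign_valid_all | exact: benign_valid_all |].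
by move=> /(f_equal (@projT1 _ _)) /= /eqP; apply/negP.
Qed.

Lemma benign_pair_of_surplus m :
  (Nmin m + #|Adv m| < Nanc m)%N -> benign_pair.
Proof.
move=> lt; have /card_gt0P [x xC] : (0 < #|~: Adv m|)%N.
  by rewrite card_benign_anchors; lia.
have cardD1 : #|~: Adv m :\ x| = (Nanc m - #|Adv m| - 1)%N.
  by have := cardsD1 x (~: Adv m); rewrite xC card_benign_anchors; lia.
exists (existT _ m (~: Adv m)), (existT _ m (~: Adv m :\ x)); split.
- by apply: benign_valid_all; lia.
- by apply: benign_valid_sub; [exact: subD1set | rewrite cardD1; lia].
- move=> /(f_equal (fun s : subset_t Nanc => #|tagged s|)) /=.
  by rewrite cardD1 card_benign_anchors; lia.
Qed.

End BenignSubsets.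

Section Recovery.

Variables (M : nat) (Nanc Nmin : 'I_M -> nat).
Variable Adv : forall m : 'I_M, {set 'I_(Nanc m)}.
Variables (P : eqType) (est : subset_t Nanc -> P) (p : P).
Hypothesis est_benign : forall s, valid Nmin s -> benign Adv s -> est s = p.
Hypothesis est_spoofed : forall s, valid Nmin s -> ~~ benign Adv s ->
  forall s', valid Nmin s' -> s' <> s -> est s' <> est s.

Lemma consistent_est s : consistent Nmin est s -> est s = p.
Proof.
move=> [vs [s' [vs' [s's es's]]]].
have [bs | nbs] := boolP (benign Adv s); first exact: est_benign.
by case: (est_spoofed vs nbs vs' s's).
Qed.

Lemma recovered_of_benign_pair : benign_pair Nmin Adv -> recovered Nmin est p.
Proof.
move=> [s1 [s2 [/andP [v1 b1] /andP [v2 b2] s12]]]; split; last exact: consistent_est.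
exists s1; split=> //; exists s2; split=> //; split; first by move=> e; apply: s12.
by rewrite (est_benign v1 b1) (est_benign v2 b2).
Qed.

End Recovery.

Local Open Scope ring_scope.

Theorem theorem1 (R : realFieldType) (M : nat) (Nmin Nanc Nadv : 'I_M -> nat)
  (Adv : forall m : 'I_M, {set 'I_(Nanc m)})
  (hAdv : forall m : 'I_M, #|Adv m| = Nadv m)
  (est : subset_t Nanc -> 'rV[R]_3) (p_usr : 'rV[R]_3)
  (hbenign : forall s, valid Nmin s -> benign Adv s -> est s = p_usr)
  (hspoof : forall s, valid Nmin s -> ~~ benign Adv s ->
      est s <> p_usr /\
      (forall s', valid Nmin s' -> s' <> s -> est s' <> est s))
  (hcond : (1 < #|[set m : 'I_M |
              ((Nanc m)%:Z - (Nadv m)%:Z - (Nmin m)%:Z == 0)%R]|)%N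
           \/ exists m : 'I_M, 0 < (Nanc m)%:Z - (Nadv m)%:Z - (Nmin m)%:Z) :
  recovered Nmin est p_usr.
Proof.
apply: (recovered_of_benign_pair hbenign) => [s vs nbs|].
  by case: (hspoof s vs nbs).
case: hcond => [/card_gt1P [m1 [m2 [+ + m12]]] | [m hm]].
  rewrite !inE => /eqP tight1 /eqP tight2.
  by apply: (benign_pair_of_tight m12); rewrite hAdv; lia.
by apply: (benign_pair_of_surplus (m := m)); rewrite hAdv; lia.
Qed.
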